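(* Fix $\eta>0$, $\lambda\in\mathbb{R}^{2md}$ and $i\in V$, and let $\lambda'$ be obtained from $\lambda$ by replacing, for every $e\in N_i$, the block $\lambda_{e,i}$ with $$\lambda'_{e,i}(x)=\lambda_{e,i}(x)+\frac1\eta\log S^\lambda_{e,i}(x)-\frac{1}{\eta(|N_i|+1)}\log\Big(\mu^\lambda_i(x)\prod_{e'\in N_i}S^\lambda_{e',i}(x)\Big),\quad x\in\chi,$$ all other coordinates unchanged. Then $$L(\lambda)-L(\lambda')\ \ge\ \frac{1}{8|N_i|\eta}\sum_{e\in N_i}\|\nu^\lambda_{e,i}\|_1^2.$$
   Context: Let $G=(V,E)$ be a finite undirected graph with $n=|V|$, $m=|E|$, every vertex incident to at least one edge; $N_i=\{e\in E:i\in e\}$. $\chi$ is a finite label set with $d=|\chi|\ge2$. Costs $C_i\in\mathbb{R}^\chi$, $C_e\in\mathbb{R}^{\chi^2}$; for $e=\{i,j\}$, $x_e=(x_i,x_j)$ and $(x_e)_i=x_i$. Dual variables $\lambda=(\lambda_{e,i}(x))_{e\in E,i\in e,x\in\chi}\in\mathbb{R}^{2md}$ and $$L(\lambda)=\frac1\eta\sum_{i\in V}\log\sum_{x\in\chi}\exp\Big(-\eta C_i(x)+\eta\sum_{e\in N_i}\lambda_{e,i}(x)\Big)+\frac1\eta\sum_{e\in E}\log\sum_{x_e\in\chi^2}\exp\Big(-\eta C_e(x_e)-\eta\sum_{i\in e}\lambda_{e,i}((x_e)_i)\Big).$$ $\mu^\lambda_i(x)\propto\exp(-\eta C_i(x)+\eta\sum_{e\in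 N_i}\lambda_{e,i}(x))$, $\mu^\lambda_e(x_e)\propto\exp(-\eta C_e(x_e)-\eta\sum_{i\in e}\lambda_{e,i}((x_e)_i))$, each normalized to sum to $1$; $S^\lambda_{e,i}(x)=\sum_{x_e:(x_e)_i=x}\mu^\lambda_e(x_e)$; slack $\nu^\lambda_{e,i}=S^\lambda_{e,i}-\mu^\lambda_i$. *)

From HB Require Import structures.
From mathcomp Require Import all_boot all_order all_algebra.
From mathcomp Require Import all_classical all_reals all_analysis.
Set Implicit Arguments. Unset Strict Implicit. Unset Printing Implicit Defensive.
Import Order.TTheory GRing.Theory Num.Theory.
Local Open Scope ring_scope.

(* A graph: vertex type V, edge type E, each edge e = {src e, tgt e}
   (the orientation src/tgt is an arbitrary labelling of the two endpoints). Dual variables lam e i x (only coordinates with i \in e matter). *)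
Section Defs.
Variables (R : realType) (V E chi : finType).
Variables (src tgt : E -> V).
Variable (eta : R).
Variables (Ci : V -> chi -> R) (Ce : E -> chi * chi -> R).

Definition incident (e : E) (i : V) : bool := (src e == i) || (tgt e == i).
Definition Nbr (i : V) : {set E} := [set e | incident e i].

(* (x_e)_i for x_e = (x_{src e}, x_{tgt e}) *)
Definition proj_at (e : E) (i : V) (p : chi * chi) : chi :=
  if src e == i then p.1 else p.2.

Definition node_w (lam : E -> V -> chi -> R) (i : V) (x : chi) : R :=
  expR (- eta * Ci i x + eta * \sum_(e in Nbr i) lam e i x).
Definition edge_w (lam : E -> V -> chi -> R) (e : E) (p : chi * chi) : R :=
  expR (- eta * Ce e p - eta * (lam e (src e) p.1 + lam e (tgt e) p.2)).

Definition mu_node lam i x := node_w lam i x / \sum_(y : chi) node_w lam i y.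
Definition mu_edge lam e p := edge_w lam e p / \sum_(q : chi * chi) edge_w lam e q.

Definition Smarg lam (e : E) (i : V) (x : chi) : R :=
  \sum_(p : chi * chi | proj_at e i p == x) mu_edge lam e p.

Definition nu_slack lam e i x := Smarg lam e i x - mu_node lam i x.

Definition Ldual (lam : E -> V -> chi -> R) : R :=
  eta^-1 * \sum_(i : V) ln (\sum_(x : chi) node_w lam i x)
  + eta^-1 * \sum_(e : E) ln (\sum_(p : chi * chi) edge_w lam e p).

Definition lam_update (lam : E -> V -> chi -> R) (i : V) : E -> V -> chi -> R :=
  fun e j x =>
    if (j == i) && (e \in Nbr i) then
      lam e i x + eta^-1 * ln (Smarg lam e i x)
      - (eta * (#|Nbr i|%:R + 1))^-1 *
          ln (mu_node lam i x * \prod_(e' in Nbr i) Smarg lam e' i x)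
    else lam e j x.
End Defs.

From Pilot Require Import Defs.
From HB Require Import structures.
From mathcomp Require Import all_boot all_order all_algebra.
From mathcomp Require Import all_classical all_reals all_analysis.
From mathcomp Require Import lra ring.
Import Order.TTheory GRing.Theory Num.Theory.
Local Open Scope ring_scope.

(* Write k = |N_i|, logprod x = log mu_i(x) + sum_{e in N_i} log S_e(x) and
   geo x = exp (logprod x / (k + 1)).  The update multiplies the node partition
   function at i, and every edge partition function on N_i, by sum_x geo x and
   changes nothing else, so  L(lam) - L(lam') = -((k+1)/eta) log sum_x geo x,
   which is at least ((k+1)/eta) (1 - sum_x geo x).  Jensen's inequality for
   exp, with weights 2/(k(k+1)) on log sqrt(S_e mu_i) and (k-1)/(k(k+1)) on
   log S_e, bounds geo x by a mixture of the sqrt(S_e(x) mu_i(x)) and S_e(x);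
   summing over x, 1 - sum_x geo x >= 2/(k(k+1)) sum_e (1 - BC(S_e, mu_i)) with
   BC the Bhattacharyya affinity.  Finally ||p - q||_1^2 <= 8 (1 - BC(p, q)),
   a consequence of Cauchy-Schwarz, yields a decrease of at least
   (1/(4 k eta)) sum_e ||nu_e||_1^2, twice the amount claimed. *)

Section RealInequalities.
Variable R : realType.
Implicit Types (I : finType).

Lemma sumr_gt0_inhabited I (j0 : I) (f : I -> R) :
  (forall j, 0 < f j) -> 0 < \sum_j f j.
Proof.
move=> f_gt0; rewrite (bigD1 j0) //=.
have : 0 <= \sum_(j | j != j0) f j by apply: sumr_ge0 => j _; apply: ltW.
by have := f_gt0 j0; lra.
Qed.

(* Cauchy-Schwarz for finite sums, from
   0 <= sum_j (u_j V - v_j C)^2 = V (U V - C^2). *)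
Lemma cauchy_schwarz I (u v : I -> R) :
  (\sum_j u j * v j) ^+ 2 <= (\sum_j u j ^+ 2) * (\sum_j v j ^+ 2).
Proof.
set C := \sum_j u j * v j; set U := \sum_j u j ^+ 2; set V := \sum_j v j ^+ 2.
have V_ge0 : 0 <= V by apply: sumr_ge0 => j _; apply: sqr_ge0.
have [V0|V_neq0] := eqVneq V 0.
  have v0 j : v j = 0.
    apply/eqP; rewrite -sqrf_eq0; apply/eqP/(psumr_eq0P _ V0) => // l _.
    exact: sqr_ge0.
  rewrite /C big1 ?V0 ?expr2 ?mulr0 // => j _; by rewrite v0 mulr0.
have expand : \sum_j (u j * V - v j * C) ^+ 2 = V * (U * V - C ^+ 2).
  rewrite (eq_bigr (fun j => u j ^+ 2 * V ^+ 2 - u j * v j * (2 * V * C)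
                             + v j ^+ 2 * C ^+ 2)); last by move=> j _; ring.
  by rewrite big_split sumrB /= -!mulr_suml -/C -/U -/V; ring.
have : 0 <= V * (U * V - C ^+ 2).
  by rewrite -expand; apply: sumr_ge0 => j _; apply: sqr_ge0.
by rewrite pmulr_rge0 ?lt_def ?V_neq0 // subr_ge0.
Qed.

Lemma l1_sqr_le_hellinger I (p q : I -> R) :
  (forall j, 0 <= p j) -> (forall j, 0 <= q j) ->
  \sum_j p j = 1 -> \sum_j q j = 1 ->
  (\sum_j `|p j - q j|) ^+ 2 <= 8 * (1 - \sum_j Num.sqrt (p j) * Num.sqrt (q j)).
Proof.
move=> p_ge0 q_ge0 p1 q1.
set a := fun j => Num.sqrt (p j); set b := fun j => Num.sqrt (q j).
set B := \sum_j a j * b j.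
have pE j : p j = a j ^+ 2 by rewrite sqr_sqrtr.
have qE j : q j = b j ^+ 2 by rewrite sqr_sqrtr.
have a_ge0 j : 0 <= a j := sqrtr_ge0 _.
have b_ge0 j : 0 <= b j := sqrtr_ge0 _.
have diffE : \sum_j (a j - b j) ^+ 2 = 2 - 2 * B.
  rewrite (eq_bigr (fun j => p j + q j - 2 * (a j * b j))).
    by rewrite sumrB big_split /= p1 q1 -mulr_sumr.
  by move=> j _; rewrite pE qE; ring.
have sumE : \sum_j (a j + b j) ^+ 2 = 2 + 2 * B.
  rewrite (eq_bigr (fun j => p j + q j + 2 * (a j * b j))).
    by rewrite !big_split /= p1 q1 -mulr_sumr.
  by move=> j _; rewrite pE qE; ring.
have factor j : `|p j - q j| = `|a j - b j| * (a j + b j).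
  rewrite -[a j + b j]ger0_norm ?addr_ge0 // -normrM pE qE; congr `|_|; ring.
have CS := @cauchy_schwarz I (fun j => `|a j - b j|) (fun j => a j + b j).
rewrite /= (eq_bigr _ (fun j _ => real_normK (num_real (a j - b j)))) in CS.
rewrite diffE sumE -(eq_bigr _ (fun j _ => factor j)) in CS.
have B_le1 : B <= 1.
  have : 0 <= 2 - 2 * B by rewrite -diffE; apply: sumr_ge0 => j _; apply: sqr_ge0.
  lra.
nra.
Qed.

(* Jensen's inequality for the convex function expR, via its tangent lines. *)
Lemma expR_jensen I (P : pred I) (w y : I -> R) :
  (forall j, P j -> 0 <= w j) -> \sum_(j | P j) w j = 1 ->
  expR (\sum_(j | P j) w j * y j) <= \sum_(j | P j) w j * expR (y j).
Proof.
move=> w_ge0 w1; set m := \sum_(j | P j) w j * y j.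
have tangent t : expR m * (1 + (t - m)) <= expR t.
  have -> : expR t = expR m * expR (t - m) by rewrite -expRD addrC subrK.
  by rewrite ler_wpM2l ?expR_ge0 ?expR_ge1Dx.
have -> : expR m = \sum_(j | P j) w j * (expR m * (1 + (y j - m))).
  rewrite (eq_bigr (fun j => expR m * (w j + w j * y j - m * w j))).
    by rewrite -mulr_sumr sumrB big_split /= -mulr_sumr w1 -/m; ring.
  by move=> j _; ring.
by apply: ler_sum => j Pj; apply: ler_wpM2l; [exact: w_ge0 | exact: tangent].
Qed.

(* Jensen for a family carrying two weighted points per index, obtained by
   applying expR_jensen to the index type I * bool. *)
Lemma expR_jensen2 I (P : pred I) (a b y z : I -> R) :
  (forall j, P j -> 0 <= a j) -> (forall j, P j -> 0 <= b j) ->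
  \sum_(j | P j) (a j + b j) = 1 ->
  expR (\sum_(j | P j) (a j * y j + b j * z j))
  <= \sum_(j | P j) (a j * expR (y j) + b j * expR (z j)).
Proof.
move=> a_ge0 b_ge0 ab1.
pose w (jc : I * bool) := if jc.2 then a jc.1 else b jc.1.
pose v (jc : I * bool) := if jc.2 then y jc.1 else z jc.1.
have pairE (f : I * bool -> R) :
    \sum_(jc | P jc.1) f jc = \sum_(j | P j) (f (j, true) + f (j, false)).
  rewrite (eq_bigr (fun j => \sum_(c : bool) f (j, c))); last first.
    by move=> j _; rewrite big_bool.
  by rewrite pair_big_dep; apply: eq_big => [[j c]|[j c] _] //=; rewrite andbT.
have := @expR_jensen _ (fun jc : I * bool => P jc.1) w v.
rewrite !pairE; apply=> // -[j [|]] /= Pj; [exact: a_ge0 | exact: b_ge0].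
Qed.

Lemma expR_half_ln (y : R) : 0 < y -> expR (ln y / 2) = Num.sqrt y.
Proof.
move=> y_gt0; have sqrE : expR (ln y / 2) ^+ 2 = y.
  by rewrite expr2 -expRD -splitr lnK // posrE.
by rewrite -[in RHS]sqrE sqrtr_sqr ger0_norm // expR_ge0.
Qed.
End RealInequalities.

Section BlockUpdate.
Variables (R : realType) (V E chi : finType) (src tgt : E -> V).
Hypothesis no_loop : forall e, src e != tgt e.
Variables (Ci : V -> chi -> R) (Ce : E -> chi * chi -> R) (eta : R).
Hypothesis eta_gt0 : 0 < eta.
Variables (lam : E -> V -> chi -> R) (i : V) (x0 : chi).

Local Notation N := (Nbr src tgt i).
Local Notation k := #|Nbr src tgt i|.
Local Notation lam' := (lam_update src tgt eta Ci Ce lam i).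
Local Notation nw := (node_w src tgt eta Ci).
Local Notation ew := (edge_w src tgt eta Ce).
Local Notation mu := (mu_node src tgt eta Ci lam i).
Local Notation mu_e := (mu_edge src tgt eta Ce lam).
Local Notation S := (fun e => Smarg src tgt eta Ce lam e i).
Local Notation Z := (fun j => \sum_y nw lam j y).
Local Notation W := (fun e => \sum_p ew lam e p).

Lemma node_mass_gt0 l j : 0 < \sum_y nw l j y.
Proof. by apply: (@sumr_gt0_inhabited R _ x0) => y; exact: expR_gt0. Qed.

Lemma edge_mass_gt0 l e : 0 < \sum_p ew l e p.
Proof. by apply: (@sumr_gt0_inhabited R _ (x0, x0)) => p; exact: expR_gt0. Qed.

Lemma mu_edge_gt0 e p : 0 < mu_e e p.
Proof. by apply: divr_gt0; [exact: expR_gt0 | exact: edge_mass_gt0]. Qed.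

Lemma mu_gt0 x : 0 < mu x.
Proof. by apply: divr_gt0; [exact: expR_gt0 | exact: node_mass_gt0]. Qed.

(* Every label x is the i-coordinate of the diagonal pair (x, x). *)
Lemma S_gt0 e x : 0 < S e x.
Proof.
rewrite /Smarg (bigD1 (x, x)) /=; last by rewrite /proj_at; case: ifP.
have : 0 <= \sum_(p | (proj_at src e i p == x) && (p != (x, x))) mu_e e p.
  by apply: sumr_ge0 => p _; apply: ltW; exact: mu_edge_gt0.
by have := mu_edge_gt0 e (x, x); lra.
Qed.

Lemma sum_mu : \sum_x mu x = 1.
Proof. by rewrite /mu_node -mulr_suml divff // gt_eqF // node_mass_gt0. Qed.

Lemma sum_S e : \sum_x S e x = 1.
Proof.
transitivity (\sum_p mu_e e p).
  by rewrite (partition_big (proj_at src e i) xpredT).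
by rewrite /mu_edge -mulr_suml divff // gt_eqF // edge_mass_gt0.
Qed.

Lemma deg_succ_gt0 : 0 < k%:R + 1 :> R.
Proof. by rewrite ltr_wpDl ?ler0n. Qed.

Definition logprod x := ln (mu x) + \sum_(e in N) ln (S e x).
Definition geo x := expR (logprod x / (k%:R + 1)).

Definition shift e x := eta^-1 * ln (S e x) - (eta * (k%:R + 1))^-1 *
  ln (mu x * \prod_(e' in N) S e' x).

Lemma ln_mu_prodS x : ln (mu x * \prod_(e in N) S e x) = logprod x.
Proof.
rewrite -[RHS]expRK /logprod expRD expR_sum lnK ?posrE ?mu_gt0 //.
by congr (ln (_ * _)); apply: eq_bigr => e _; rewrite lnK // posrE S_gt0.
Qed.

Lemma lam_update_shift e j x :
  lam' e j x = lam e j x + (if (j == i) && (e \in N) then shift e x else 0).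
Proof.
rewrite /lam_update /shift; case: ifP => [/andP[/eqP -> _]|_]; last by rewrite addr0.
by rewrite !addrA.
Qed.

Lemma eta_shift e x : eta * shift e x = ln (S e x) - logprod x / (k%:R + 1).
Proof.
by rewrite /shift ln_mu_prodS; field; rewrite !gt_eqF ?deg_succ_gt0.
Qed.

(* At vertex i the Gibbs weight of x becomes Z_i * geo x: the update replaces
   log mu_i(x) by logprod x / (k + 1). *)
Lemma node_w_update x : nw lam' i x = Z i * geo x.
Proof.
have sum_shift :
    eta * \sum_(e in N) shift e x = logprod x / (k%:R + 1) - ln (mu x).
  rewrite mulr_sumr (eq_bigr _ (fun e _ => eta_shift e x)) sumrB sumr_const.
  by rewrite /logprod -mulr_natr; field; rewrite gt_eqF ?deg_succ_gt0.
have nwE : nw lam i x = Z i * expR (ln (mu x)).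
  by rewrite lnK ?posrE ?mu_gt0 // /mu_node mulrC divfK // gt_eqF // node_mass_gt0.
have sumE : \sum_(e in N) lam' e i x
    = \sum_(e in N) lam e i x + \sum_(e in N) shift e x.
  by rewrite -big_split; apply: eq_bigr => e eN; rewrite lam_update_shift eqxx eN.
rewrite /node_w sumE mulrDr addrA expRD -/(nw lam i x) nwE sum_shift -mulrA -expRD.
by rewrite /geo addrC subrK.
Qed.

Lemma node_w_other j x : j != i -> nw lam' j x = nw lam j x.
Proof.
move=> ji; rewrite /node_w; congr expR; congr (_ + _ * _).
by apply: eq_bigr => e _; rewrite lam_update_shift (negbTE ji) addr0.
Qed.

Lemma edge_w_other e p : e \notin N -> ew lam' e p = ew lam e p.
Proof. by move=> eN; rewrite /edge_w !lam_update_shift (negbTE eN) !andbF !addr0. Qed.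

(* On an edge e at i only the coordinate (x_e)_i is shifted, which rescales
   the edge weight by geo / S_e at that label. *)
Lemma edge_w_update e p : e \in N ->
  ew lam' e p = ew lam e p * (geo (proj_at src e i p) / S e (proj_at src e i p)).
Proof.
move=> eN; have scale y : geo y / S e y = expR (- (eta * shift e y)).
  by rewrite eta_shift opprB expRD expRN lnK // posrE S_gt0.
rewrite scale /edge_w !lam_update_shift eN !andbT -expRD /proj_at.
move: eN; rewrite inE /incident; case: (eqVneq (src e) i) => [si _|_ /= ti].
  have -> : (tgt e == i) = false by apply/negbTE; rewrite -si eq_sym no_loop.
  by congr expR; ring.
by rewrite ti; congr expR; ring.
Qed.

Lemma edge_mass_update e : e \in N -> \sum_p ew lam' e p = W e * \sum_x geo x.
Proof.
move=> eN; rewrite (eq_bigr _ (fun p _ => edge_w_update e p eN)).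
have ewE p : ew lam e p = W e * mu_e e p.
  by rewrite /mu_edge mulrC divfK // gt_eqF // edge_mass_gt0.
under eq_bigr do rewrite ewE -mulrA.
rewrite -mulr_sumr; congr (_ * _).
rewrite (partition_big (proj_at src e i) xpredT) //=; apply: eq_bigr => y _.
rewrite (eq_bigr (fun p => mu_e e p * (geo y / S e y))).
  by rewrite -mulr_suml mulrC divfK // gt_eqF // S_gt0.
by move=> p /eqP ->.
Qed.

Lemma geo_mass_gt0 : 0 < \sum_x geo x.
Proof. by apply: (@sumr_gt0_inhabited R _ x0) => y; exact: expR_gt0. Qed.

(* The node partition function at i and the edge ones on N_i all get
   multiplied by sum_x geo x; nothing else changes. *)
Lemma dual_gap_eq : Ldual src tgt eta Ci Ce lam - Ldual src tgt eta Ci Ce lam'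
  = - (eta^-1 * ((k%:R + 1) * ln (\sum_x geo x))).
Proof.
set G := \sum_x geo x.
have nodes : \sum_j ln (\sum_y nw lam' j y) = \sum_j ln (Z j) + ln G.
  rewrite (eq_bigr (fun j => ln (Z j) + (if j == i then ln G else 0))).
    by rewrite big_split /= -big_mkcond big_pred1_eq.
  move=> j _; case: eqVneq => [->|ji].
    by rewrite (eq_bigr _ (fun x _ => node_w_update x)) -mulr_sumr lnM // posrE
      ?node_mass_gt0 ?geo_mass_gt0.
  by rewrite addr0; congr ln; apply: eq_bigr => x _; exact: node_w_other.
have edges : \sum_e ln (\sum_p ew lam' e p) = \sum_e ln (W e) + ln G *+ k.
  rewrite (eq_bigr (fun e => ln (W e) + (if e \in N then ln G else 0))).
    by rewrite big_split /= -big_mkcond sumr_const.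
  move=> e _; case: ifP => eN.
    by rewrite edge_mass_update // lnM // posrE ?edge_mass_gt0 ?geo_mass_gt0.
  by rewrite addr0; congr ln; apply: eq_bigr => p _; apply: edge_w_other; rewrite eN.
by rewrite /Ldual nodes edges -mulr_natl; ring.
Qed.

Hypothesis N_nonempty : (0 < k)%N.

Lemma deg_gt0 : 0 < k%:R :> R.
Proof. by rewrite ltr0n. Qed.

Definition affinity e := \sum_x Num.sqrt (S e x) * Num.sqrt (mu x).

(* Jensen: logprod x / (k + 1) is the average, with weights 2/(k(k+1)) and
   (k-1)/(k(k+1)) per edge, of log sqrt(S_e mu) and log S_e. *)
Lemma geo_le_mixture x :
  geo x <= \sum_(e in N)
    (2 / (k%:R * (k%:R + 1)) * (Num.sqrt (S e x) * Num.sqrt (mu x))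
     + (k%:R - 1) / (k%:R * (k%:R + 1)) * S e x).
Proof.
have k_ge1 : 1 <= k%:R :> R by rewrite ler1n.
set a := 2 / _; set b := (k%:R - 1) / _.
have a_ge0 : 0 <= a by rewrite divr_ge0 // mulr_ge0 //; lra.
have b_ge0 : 0 <= b by rewrite divr_ge0 ?mulr_ge0 //; lra.
have weights1 : \sum_(e in N) (a + b) = 1.
  rewrite sumr_const -mulr_natr /a /b.
  by field; rewrite ?(gt_eqF deg_gt0) ?(gt_eqF deg_succ_gt0).
have meanE : \sum_(e in N) (a * (ln (S e x) / 2 + ln (mu x) / 2) + b * ln (S e x))
    = logprod x / (k%:R + 1).
  rewrite (eq_bigr (fun e => a / 2 * ln (mu x) + (a / 2 + b) * ln (S e x))); last first.
    by move=> e _; ring.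
  rewrite big_split /= sumr_const -mulr_sumr -mulr_natr /logprod /a /b.
  by field; rewrite ?(gt_eqF deg_gt0) ?(gt_eqF deg_succ_gt0).
have expE : \sum_(e in N) (a * (Num.sqrt (S e x) * Num.sqrt (mu x)) + b * S e x)
  = \sum_(e in N) (a * expR (ln (S e x) / 2 + ln (mu x) / 2) + b * expR (ln (S e x))).
  by apply: eq_bigr => e _; rewrite expRD !expR_half_ln ?lnK ?posrE ?S_gt0 ?mu_gt0.
by rewrite expE /geo -meanE; apply: expR_jensen2.
Qed.

(* Summing over labels, using that each S_e is a probability vector. *)
Lemma geo_mass_le :
  \sum_x geo x <= 1 - 2 / (k%:R * (k%:R + 1)) * \sum_(e in N) (1 - affinity e).
Proof.
apply: le_trans (ler_sum _ (fun x _ => geo_le_mixture x)) _.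
rewrite exchange_big /= (eq_bigr (fun e => 2 / (k%:R * (k%:R + 1)) * affinity e
    + (k%:R - 1) / (k%:R * (k%:R + 1)))); last first.
  by move=> e _; rewrite big_split /= -!mulr_sumr sum_S mulr1.
rewrite big_split /= sumrB !sumr_const -mulr_sumr -mulr_natr.
rewrite -subr_ge0 [X in 0 <= X](_ : _ = 0) //.
by field; rewrite ?(gt_eqF deg_gt0) ?(gt_eqF deg_succ_gt0).
Qed.

Lemma slack_le_geo_mass :
  \sum_(e in N) (\sum_x `|nu_slack src tgt eta Ci Ce lam e i x|) ^+ 2
  <= 4 * k%:R * (k%:R + 1) * (1 - \sum_x geo x).
Proof.
have hellinger e : (\sum_x `|nu_slack src tgt eta Ci Ce lam e i x|) ^+ 2
    <= 8 * (1 - affinity e).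
  exact: (@l1_sqr_le_hellinger R chi (S e) mu (fun x => ltW (S_gt0 e x))
    (fun x => ltW (mu_gt0 x)) (sum_S e) sum_mu).
apply: le_trans (ler_sum _ (fun e _ => hellinger e)) _.
have k_gt0 := deg_gt0.
have := geo_mass_le; rewrite -mulr_sumr.
set D := \sum_(e in N) (1 - affinity e) => geo_le.
have -> : 8 * D = 4 * k%:R * (k%:R + 1) * (2 / (k%:R * (k%:R + 1)) * D).
  by field; rewrite ?(gt_eqF deg_gt0) ?(gt_eqF deg_succ_gt0).
apply: ler_wpM2l; last lra.
by rewrite !mulr_ge0 ?ltW ?deg_succ_gt0.
Qed.

Lemma dual_decrease :
  (8 * k%:R * eta)^-1 *
    \sum_(e in N) (\sum_x `|nu_slack src tgt eta Ci Ce lam e i x|) ^+ 2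
  <= Ldual src tgt eta Ci Ce lam - Ldual src tgt eta Ci Ce lam'.
Proof.
have T_le := slack_le_geo_mass; have G_gt0 := geo_mass_gt0.
rewrite dual_gap_eq; move: T_le G_gt0.
set T := \sum_(e in N) _; set G := \sum_x geo x => T_le G_gt0.
have K_gt0 := deg_gt0; have K1_gt0 := deg_succ_gt0.
set K : R := k%:R in T_le K_gt0 K1_gt0 *.
have T_ge0 : 0 <= T by apply: sumr_ge0 => e _; apply: sqr_ge0.
have G_le1 : 0 <= 1 - G.
  by rewrite -(@pmulr_rge0 _ (4 * K * (K + 1))) ?mulr_gt0 //; apply: le_trans T_le.
have ln_le : ln G <= G - 1.
  have := expR_ge1Dx (ln G); rewrite lnK ?posrE //; lra.
have half : T / (8 * K) <= (K + 1) * (1 - G) / 2.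
  have -> : (K + 1) * (1 - G) / 2 = 4 * K * (K + 1) * (1 - G) / (8 * K).
    by field; rewrite gt_eqF.
  by apply: ler_wpM2r T_le; rewrite invr_ge0 mulr_ge0 // ltW.
have -> : (8 * K * eta)^-1 * T = eta^-1 * (T / (8 * K)).
  by field; rewrite !gt_eqF.
rewrite -mulrN; apply: ler_wpM2l; first by rewrite invr_ge0 ltW.
nra.
Qed.
End BlockUpdate.

Theorem lemma2 (R : realType) (V E chi : finType) (src tgt : E -> V)
  (Hloop : forall e : E, src e != tgt e)
  (Hsimple : forall e f : E,
      [set src e; tgt e] = [set src f; tgt f] -> e = f)
  (Hcover : forall v : V, exists e : E, Defs.incident src tgt e v)
  (Hchi : (2 <= #|chi|)%N)
  (Ci : V -> chi -> R) (Ce : E -> chi * chi -> R)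
  (eta : R) (Heta : 0 < eta) (lam : E -> V -> chi -> R) (i : V) :
  Defs.Ldual src tgt eta Ci Ce lam
    - Defs.Ldual src tgt eta Ci Ce (Defs.lam_update src tgt eta Ci Ce lam i)
  >= (8 * #|Defs.Nbr src tgt i|%:R * eta)^-1 *
     \sum_(e in Defs.Nbr src tgt i)
        (\sum_(x : chi) `|Defs.nu_slack src tgt eta Ci Ce lam e i x|) ^+ 2.
Proof.
have /card_gt0P [x0 _] : (0 < #|chi|)%N by apply: leq_trans Hchi.
have N_nonempty : (0 < #|Nbr src tgt i|)%N.
  by have [e He] := Hcover i; apply/card_gt0P; exists e; rewrite inE.
exact: (@dual_decrease R V E chi src tgt Hloop Ci Ce eta Heta lam i x0 N_nonempty).
Qed.
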